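(* The function $\rho^*(p)$ is strictly decreasing in $p$ on $(0,1]$.
   Context: Let $f(z)=\sqrt{2/\pi}\,e^{-z^2/2}$ for $z\ge 0$. For $p\in(0,1]$, $z^*(p)>0$ is the number satisfying $\int_0^{z^*}x^pf(x)\,dx=\int_{z^*}^\infty x^pf(x)\,dx$, and $\rho^*(p)=1-\operatorname{erf}(z^*(p)/\sqrt2)$. *)

From Stdlib Require Import Reals Lra ClassicalEpsilon.
Open Scope R_scope.

(* Value of the (oriented) Riemann integral of g over [a,b]; chosen by
   Hilbert's epsilon (0 if g is not Riemann integrable there). *)
Definition Rint (g : R -> R) (a b : R) : R :=
  epsilon (inhabits 0)
    (fun v => exists pr : Riemann_integrable g a b, RiemannInt pr = v).

Definition improper_int (g : R -> R) (a L : R) : Prop :=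
  (forall b, a <= b -> inhabited (Riemann_integrable g a b)) /\
  (forall eps, 0 < eps -> exists M, forall b (pr : Riemann_integrable g a b),
       M <= b -> Rabs (RiemannInt pr - L) < eps).

Definition f (z : R) : R := sqrt (2 / PI) * exp (- z ^ 2 / 2).

(* x^p for x >= 0, p > 0, with the convention 0^p = 0 *)
Definition powp (x p : R) : R := if Rle_dec x 0 then 0 else Rpower x p.

Definition erf (x : R) : R := 2 / sqrt PI * Rint (fun t => exp (- t ^ 2)) 0 x.

(* z is a value of z^*(p): z > 0 and
   int_0^z x^p f(x) dx = int_z^oo x^p f(x) dx *)
Definition zstar_spec (p z : R) : Prop :=
  0 < z /\ improper_int (fun x => powp x p * f x) z
                        (Rint (fun x => powp x p * f x) 0 z).

(* rho^* as a function of the threshold z^* *)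
Definition rho_of (z : R) : R := 1 - erf (z / sqrt 2).

(* Raising p to q > p multiplies the density x^p f(x) by the increasing factor
   x^(q-p).  Compared with the constant z^(q-p), at the threshold z = z^*(p)
   this factor is smaller on [0, z] and larger on [z, oo), so the new density
   puts strictly less mass left of z than right of it; the balancing point
   z^*(q) must therefore lie to the right of z^*(p).  Finally
   rho^* = 1 - erf(z^*/sqrt 2) is decreasing in z^* because erf is increasing. *)

From Pilot Require Import Defs.
From Stdlib Require Import Reals Lra ClassicalEpsilon.
Open Scope R_scope.

Lemma Rpower_pos x p : 0 < Rpower x p.
Proof. apply exp_pos. Qed.

Lemma powp_nonneg x p : 0 <= powp x p.
Proof.
  unfold powp; destruct (Rle_dec x 0); [lra | left; apply Rpower_pos].
Qed.

Lemma powp_pos x p : 0 < x -> 0 < powp x p.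
Proof. intros Hx; unfold powp; destruct (Rle_dec x 0); [lra | apply Rpower_pos]. Qed.

Lemma powp_plus x p q : 0 < x -> powp x (p + q) = Rpower x q * powp x p.
Proof.
  intros Hx; unfold powp; destruct (Rle_dec x 0); [lra|].
  rewrite <- Rpower_plus; f_equal; ring.
Qed.

Lemma powp_continuity_pt0 p : 0 < p -> continuity_pt (fun x => powp x p) 0.
Proof.
  intros Hp eps Heps.
  exists (Rpower eps (/ p)); split; [apply Rpower_pos|].
  intros x [_ Hx]; simpl in *; unfold Rdist in *.
  unfold powp; destruct (Rle_dec 0 0) as [_|]; [|lra].
  destruct (Rle_dec x 0) as [Hx0|Hx0].
  - rewrite Rminus_0_r, Rabs_R0; lra.
  - rewrite Rminus_0_r, Rabs_right in Hx by lra.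
    rewrite Rminus_0_r, Rabs_right by (left; apply Rpower_pos).
    replace eps with (Rpower (Rpower eps (/ p)) p).
    + apply Rlt_Rpower_l; lra.
    + rewrite Rpower_mult, Rinv_l by lra; apply Rpower_1; lra.
Qed.

Lemma powp_continuity p : 0 < p -> continuity (fun x => powp x p).
Proof.
  intros Hp x; destruct (Rtotal_order x 0) as [Hx|[->|Hx]].
  - apply continuity_pt_locally_ext with (f := fun _ => 0) (a := - x); [lra| |].
    + intros y Hy; unfold Rdist in Hy; apply Rabs_def2 in Hy.
      unfold powp; destruct (Rle_dec y 0); [reflexivity | lra].
    + apply continuity_pt_const; intros ? ?; reflexivity.
  - apply powp_continuity_pt0, Hp.
  - apply continuity_pt_locally_ext with (f := fun y => Rpower y p) (a := x); [lra| |].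
    + intros y Hy; unfold Rdist in Hy; apply Rabs_def2 in Hy.
      unfold powp; destruct (Rle_dec y 0); [lra | reflexivity].
    + apply derivable_continuous_pt; econstructor; apply derivable_pt_lim_power, Hx.
Qed.

Lemma f_pos x : 0 < Defs.f x.
Proof.
  apply Rmult_lt_0_compat; [|apply exp_pos].
  apply sqrt_lt_R0, Rdiv_lt_0_compat; [lra | apply PI_RGT_0].
Qed.

Lemma f_continuity : continuity Defs.f.
Proof.
  intro x; apply continuity_pt_mult.
  - apply continuity_pt_const; intros ? ?; reflexivity.
  - apply (continuity_pt_comp (fun x => - x ^ 2 / 2) exp); [reg|].
    apply derivable_continuous_pt, derivable_pt_exp.
Qed.

Lemma Rint_RiemannInt g a b (pr : Riemann_integrable g a b) : Rint g a b = RiemannInt pr.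
Proof.
  unfold Rint.
  destruct (epsilon_spec (inhabits 0)
              (fun v => exists pr : Riemann_integrable g a b, RiemannInt pr = v))
    as [pr' <-]; [now exists (RiemannInt pr), pr|].
  apply RiemannInt_P5.
Qed.

Lemma continuity_Riemann_integrable h a b :
  continuity h -> a <= b -> Riemann_integrable h a b.
Proof. intros Hh Hab; apply continuity_implies_RiemannInt; auto. Qed.

Lemma RiemannInt_ge_const h a b m (pr : Riemann_integrable h a b) :
  a <= b -> (forall x, a < x < b -> m <= h x) -> m * (b - a) <= RiemannInt pr.
Proof.
  intros Hab Hm; rewrite <- (RiemannInt_P15 (RiemannInt_P14 a b m)).
  apply RiemannInt_P19; auto.
Qed.

Lemma RiemannInt_scal g a b c (pr : Riemann_integrable g a b)
    (prc : Riemann_integrable (fun x => c * g x) a b) :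
  a <= b -> RiemannInt prc = c * RiemannInt pr.
Proof.
  intros Hab.
  pose (pr0 := RiemannInt_P14 a b 0).
  rewrite (RiemannInt_P18 prc (RiemannInt_P10 c pr0 pr) Hab)
    by (intros; unfold fct_cte; ring).
  rewrite (RiemannInt_P13 pr0 pr), RiemannInt_P15; ring.
Qed.

(* A nonnegative integrand positive at one point of continuity is at least
   h(x0)/2 on a whole subinterval [u, v] around x0. *)
Lemma RiemannInt_pos h a b x0 (pr : Riemann_integrable h a b) :
  continuity h -> a < x0 < b -> (forall x, a < x < b -> 0 <= h x) -> 0 < h x0 ->
  0 < RiemannInt pr.
Proof.
  intros Hh Hx0 Hnn Hpos.
  destruct (Hh x0 (h x0 / 2)) as [delta [Hdelta Hnear]]; [lra|].
  set (u := Rmax a (x0 - delta / 2)); set (v := Rmin b (x0 + delta / 2)).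
  assert (Hu : a <= u /\ u < x0) by (unfold u; split; [apply Rmax_l | apply Rmax_lub_lt; lra]).
  assert (Hv : v <= b /\ x0 < v) by (unfold v; split; [apply Rmin_l | apply Rmin_glb_lt; lra]).
  assert (Hbump : forall x, u < x < v -> h x0 / 2 <= h x).
  { intros x Hx; destruct (Req_dec x x0) as [->|Hne]; [lra|].
    assert (Hux : x0 - delta / 2 <= u) by apply Rmax_r.
    assert (Hvx : v <= x0 + delta / 2) by apply Rmin_r.
    assert (Hd : R_dist (h x) (h x0) < h x0 / 2).
    { apply Hnear; split.
      - split; [exact I | now apply not_eq_sym].
      - simpl; unfold R_dist; apply Rabs_def1; lra. }
    unfold R_dist in Hd; apply Rabs_def2 in Hd; lra. }
  pose proof (continuity_Riemann_integrable h a u Hh ltac:(lra)) as pr1.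
  pose proof (continuity_Riemann_integrable h u v Hh ltac:(lra)) as pr2.
  pose proof (continuity_Riemann_integrable h v b Hh ltac:(lra)) as pr3.
  pose proof (continuity_Riemann_integrable h a v Hh ltac:(lra)) as pr12.
  rewrite <- (RiemannInt_P26 pr12 pr3 pr), <- (RiemannInt_P26 pr1 pr2 pr12).
  pose proof (RiemannInt_ge_const h a u 0 pr1 ltac:(lra) ltac:(intros; apply Hnn; lra)).
  pose proof (RiemannInt_ge_const h u v _ pr2 ltac:(lra) Hbump).
  pose proof (RiemannInt_ge_const h v b 0 pr3 ltac:(lra) ltac:(intros; apply Hnn; lra)).
  assert (0 < h x0 / 2 * (v - u)) by (apply Rmult_lt_0_compat; lra).
  lra.
Qed.

Section ContinuousIntegrals.

Variables g h : R -> R.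
Hypothesis g_cont : continuity g.
Hypothesis h_cont : continuity h.

Lemma Rint_Chasles a b c : a <= b -> b <= c -> Rint h a b + Rint h b c = Rint h a c.
Proof.
  intros Hab Hbc.
  pose proof (continuity_Riemann_integrable h a b h_cont Hab) as pr1.
  pose proof (continuity_Riemann_integrable h b c h_cont Hbc) as pr2.
  pose proof (continuity_Riemann_integrable h a c h_cont ltac:(lra)) as pr.
  rewrite (Rint_RiemannInt _ _ _ pr1), (Rint_RiemannInt _ _ _ pr2),
    (Rint_RiemannInt _ _ _ pr).
  apply RiemannInt_P26.
Qed.

Lemma Rint_nonneg a b : a <= b -> (forall x, a < x < b -> 0 <= h x) -> 0 <= Rint h a b.
Proof.
  intros Hab Hnn; pose proof (continuity_Riemann_integrable h a b h_cont Hab) as pr.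
  rewrite (Rint_RiemannInt _ _ _ pr).
  pose proof (RiemannInt_ge_const h a b 0 pr Hab Hnn); lra.
Qed.

Lemma Rint_scal a b c : a <= b -> Rint (fun x => c * g x) a b = c * Rint g a b.
Proof.
  intros Hab; pose proof (continuity_Riemann_integrable g a b g_cont Hab) as pr.
  assert (prc : Riemann_integrable (fun x => c * g x) a b).
  { apply continuity_Riemann_integrable; [|exact Hab].
    intro x; apply continuity_pt_scal, g_cont. }
  rewrite (Rint_RiemannInt _ _ _ pr), (Rint_RiemannInt _ _ _ prc).
  apply RiemannInt_scal, Hab.
Qed.

Lemma Rint_lt a b x0 :
  a < x0 < b -> (forall x, a < x < b -> g x <= h x) -> g x0 < h x0 ->
  Rint g a b < Rint h a b.
Proof.
  intros Hx0 Hle Hlt.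
  pose proof (continuity_Riemann_integrable g a b g_cont ltac:(lra)) as prg.
  pose proof (continuity_Riemann_integrable h a b h_cont ltac:(lra)) as prh.
  pose proof (RiemannInt_P10 (-1) prh prg) as prd.
  assert (Hpos : 0 < RiemannInt prd).
  { apply (RiemannInt_pos _ a b x0); auto.
    - intro x; apply continuity_pt_plus; [|apply continuity_pt_scal]; auto.
    - intros x Hx; pose proof (Hle x Hx); lra.
    - lra. }
  rewrite (RiemannInt_P13 prh prg) in Hpos.
  rewrite (Rint_RiemannInt _ _ _ prg), (Rint_RiemannInt _ _ _ prh); lra.
Qed.

Lemma improper_int_shift a b L :
  a <= b -> improper_int h a L -> improper_int h b (L - Rint h a b).
Proof.
  intros Hab [_ Hlim]; split.
  - intros x Hbx; constructor; apply continuity_Riemann_integrable; auto.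
  - intros eps Heps; destruct (Hlim eps Heps) as [M HM].
    exists (Rmax b M); intros x pr Hx.
    assert (Hbx : b <= x) by (eapply Rle_trans; [apply Rmax_l | exact Hx]).
    assert (HMx : M <= x) by (eapply Rle_trans; [apply Rmax_r | exact Hx]).
    pose proof (continuity_Riemann_integrable h a b h_cont Hab) as prab.
    pose proof (continuity_Riemann_integrable h a x h_cont ltac:(lra)) as prax.
    rewrite (Rint_RiemannInt _ _ _ prab).
    specialize (HM x prax HMx).
    rewrite <- (RiemannInt_P26 prab pr prax) in HM.
    replace (RiemannInt pr - (L - RiemannInt prab))
      with (RiemannInt prab + RiemannInt pr - L) by ring.
    exact HM.
Qed.

Lemma improper_int_scal a L c :
  improper_int g a L -> improper_int (fun x => c * g x) a (c * L).
Proof.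
  intros [_ Hlim]; split.
  - intros b Hab; constructor; apply continuity_Riemann_integrable; [|exact Hab].
    intro x; apply continuity_pt_scal, g_cont.
  - intros eps Heps.
    assert (Hc : 0 < Rabs c + 1) by (pose proof (Rabs_pos c); lra).
    destruct (Hlim (eps / (Rabs c + 1))) as [M HM]; [apply Rdiv_lt_0_compat; lra|].
    exists (Rmax a M); intros b prc Hb.
    assert (Hab : a <= b) by (eapply Rle_trans; [apply Rmax_l | exact Hb]).
    pose proof (continuity_Riemann_integrable g a b g_cont Hab) as pr.
    specialize (HM b pr (Rle_trans _ _ _ (Rmax_r _ _) Hb)).
    rewrite (RiemannInt_scal g a b c pr prc Hab), <- Rmult_minus_distr_l, Rabs_mult.
    apply Rle_lt_trans with (Rabs c * (eps / (Rabs c + 1))).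
    + apply Rmult_le_compat_l; [apply Rabs_pos | lra].
    + apply Rlt_le_trans with ((Rabs c + 1) * (eps / (Rabs c + 1))).
      * apply Rmult_lt_compat_r; [apply Rdiv_lt_0_compat|]; lra.
      * right; field; lra.
Qed.

End ContinuousIntegrals.

Lemma improper_int_le g h a L M :
  improper_int g a L -> improper_int h a M -> (forall x, a <= x -> g x <= h x) ->
  L <= M.
Proof.
  intros [Hg Hlimg] [Hh Hlimh] Hle; apply Rnot_lt_le; intro HML.
  set (eps := (L - M) / 2).
  destruct (Hlimg eps) as [Mg HMg]; [unfold eps; lra|].
  destruct (Hlimh eps) as [Mh HMh]; [unfold eps; lra|].
  set (b := Rmax a (Rmax Mg Mh)).
  assert (Hab : a <= b) by apply Rmax_l.
  assert (HMgb : Mg <= b) by (eapply Rle_trans; [apply Rmax_l | apply Rmax_r]).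
  assert (HMhb : Mh <= b) by (eapply Rle_trans; [apply Rmax_r | apply Rmax_r]).
  destruct (Hg b Hab) as [prg]; destruct (Hh b Hab) as [prh].
  pose proof (RiemannInt_P19 prg prh Hab ltac:(intros; apply Hle; lra)).
  specialize (HMg b prg HMgb); specialize (HMh b prh HMhb).
  apply Rabs_def2 in HMg; apply Rabs_def2 in HMh; unfold eps in *; lra.
Qed.

Definition moment_density (p x : R) : R := powp x p * Defs.f x.

Lemma moment_density_continuity p : 0 < p -> continuity (moment_density p).
Proof.
  intros Hp x; apply continuity_pt_mult; [apply powp_continuity, Hp | apply f_continuity].
Qed.

Lemma moment_density_nonneg p x : 0 <= moment_density p x.
Proof. apply Rmult_le_pos; [apply powp_nonneg | left; apply f_pos]. Qed.

Lemma moment_density_pos p x : 0 < x -> 0 < moment_density p x.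
Proof. intros Hx; apply Rmult_lt_0_compat; [apply powp_pos, Hx | apply f_pos]. Qed.

Lemma moment_density_plus p q x :
  0 < x -> moment_density (p + q) x = Rpower x q * moment_density p x.
Proof. intros Hx; unfold moment_density; rewrite powp_plus by exact Hx; ring. Qed.

Lemma zstar_increasing p1 p2 z1 z2 :
  0 < p1 -> p1 < p2 -> zstar_spec p1 z1 -> zstar_spec p2 z2 -> z1 < z2.
Proof.
  intros Hp1 Hp12 [Hz1 tail1] [Hz2 tail2].
  change (improper_int (moment_density p1) z1 (Rint (moment_density p1) 0 z1)) in tail1.
  change (improper_int (moment_density p2) z2 (Rint (moment_density p2) 0 z2)) in tail2.
  set (g1 := moment_density p1) in *; set (g2 := moment_density p2) in *.
  assert (C1 : continuity g1) by (apply moment_density_continuity; lra).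
  assert (C2 : continuity g2) by (apply moment_density_continuity; lra).
  set (d := p2 - p1); set (c := Rpower z1 d).
  assert (Hg2 : forall x, 0 < x -> g2 x = Rpower x d * g1 x).
  { intros x Hx; unfold g1, g2, d; rewrite <- moment_density_plus by exact Hx.
    f_equal; ring. }
  (* If z2 <= z1, comparing g2 = x^d g1 with c g1 on either side of z1 gives
     I2 + J < c I1 <= I2 - J, impossible since J >= 0. *)
  apply Rnot_le_lt; intro Hz21.
  set (I1 := Rint g1 0 z1); set (I2 := Rint g2 0 z2); set (J := Rint g2 z2 z1).
  assert (right_of_z1 : c * I1 <= I2 - J).
  { apply (improper_int_le (fun x => c * g1 x) g2 z1).
    - apply improper_int_scal; assumption.
    - apply improper_int_shift; assumption.
    - intros x Hx; rewrite Hg2 by lra.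
      apply Rmult_le_compat_r; [apply moment_density_nonneg|].
      apply Rle_Rpower_l; unfold d; lra. }
  assert (left_of_z1 : Rint g2 0 z1 < c * I1).
  { unfold I1; rewrite <- Rint_scal by (assumption || lra).
    assert (Cc : continuity (fun x => c * g1 x)) by (intro x; apply continuity_pt_scal, C1).
    apply (Rint_lt g2 _ C2 Cc 0 z1 (z1 / 2)).
    - lra.
    - intros x Hx; rewrite Hg2 by lra.
      apply Rmult_le_compat_r; [apply moment_density_nonneg|].
      apply Rle_Rpower_l; unfold d; lra.
    - rewrite Hg2 by lra; apply Rmult_lt_compat_r; [apply moment_density_pos; lra|].
      apply Rlt_Rpower_l; unfold d; lra. }
  assert (HJ : 0 <= J)
    by (apply Rint_nonneg; [assumption | lra | intros; apply moment_density_nonneg]).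
  assert (Hsplit : I2 + J = Rint g2 0 z1) by (apply Rint_Chasles; assumption || lra).
  lra.
Qed.

Lemma erf_increasing a b : 0 <= a < b -> erf a < erf b.
Proof.
  intros Hab; unfold erf.
  set (e := fun t => exp (- t ^ 2)).
  assert (Ce : continuity e).
  { intro x; apply (continuity_pt_comp (fun t => - t ^ 2) exp); [reg|].
    apply derivable_continuous_pt, derivable_pt_exp. }
  rewrite <- (Rint_Chasles e Ce 0 a b) by lra.
  assert (Hpos : 0 < Rint e a b).
  { pose proof (continuity_Riemann_integrable e a b Ce ltac:(lra)) as pr.
    rewrite (Rint_RiemannInt _ _ _ pr).
    apply (RiemannInt_pos e a b ((a + b) / 2)); auto; [lra| |apply exp_pos].
    intros; left; apply exp_pos. }
  assert (0 < 2 / sqrt PI)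
    by (apply Rdiv_lt_0_compat; [lra | apply sqrt_lt_R0, PI_RGT_0]).
  nra.
Qed.

Lemma rho_of_decreasing z1 z2 : 0 <= z1 < z2 -> rho_of z2 < rho_of z1.
Proof.
  intros Hz; unfold rho_of.
  assert (Hs : 0 < / sqrt 2) by (apply Rinv_0_lt_compat, sqrt_lt_R0; lra).
  assert (z1 / sqrt 2 < z2 / sqrt 2) by (apply Rmult_lt_compat_r; lra).
  assert (0 <= z1 / sqrt 2) by (apply Rmult_le_pos; lra).
  pose proof (erf_increasing (z1 / sqrt 2) (z2 / sqrt 2) ltac:(lra)); lra.
Qed.

Theorem proposition1 :
  forall p1 p2 z1 z2 : R,
    0 < p1 -> p1 < p2 -> p2 <= 1 ->
    zstar_spec p1 z1 -> zstar_spec p2 z2 ->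
    rho_of z2 < rho_of z1.
Proof.
  intros p1 p2 z1 z2 Hp1 Hp12 _ Hz1 Hz2.
  apply rho_of_decreasing; split.
  - left; apply Hz1.
  - exact (zstar_increasing p1 p2 z1 z2 Hp1 Hp12 Hz1 Hz2).
Qed.
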